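(* If $\omega\le\alpha<\vartheta(\varepsilon_{\Omega+1})$ and $m<\omega$ are such that $1<\alpha[m]_\vartheta<\omega$, then $\alpha=\omega$.
   Context: $\Omega$ is the first uncountable ordinal; $\varepsilon_{\Omega+1}$ the least $\varepsilon>\Omega$ with $\omega^\varepsilon=\varepsilon$. Every $0<\xi<\varepsilon_{\Omega+1}$ has a unique $\Omega$-normal form $\xi=\Omega^{\alpha}\beta+\gamma$ with $0<\beta<\Omega$, $\gamma<\Omega^{\alpha}$. $C(0)=\{0\}$, $C(\Omega^\alpha\beta+\gamma)=C(\alpha)\cup C(\gamma)\cup\{\beta\}$; $\xi^*=\max C(\xi)$. For $\theta<\Omega$: $0[\theta]=1[\theta]=0$; $(\Omega^\alpha\beta+\gamma)[\theta]=\Omega^\alpha\beta+\gamma[\theta]$ if $\gamma>0$; $(\Omega^\alpha\beta)[\theta]=\Omega^\alpha\theta$ if $\beta$ is a limit; $\Omega^{\alpha+1}[\theta]=\Omega^\alpha\theta$; $(\Omega^\alpha(\beta+1))[\theta]=\Omega^\alpha\beta+(\Omega^\alpha)[\theta]$ if $\beta>0$; $\Omega^\alpha[\theta]=\Omega^{\alpha[\theta]}$ if $\alpha$ is a limit. $\tau(0)=0$, $\tau(\zeta+1)=1$, $\tau(\Omega^\alpha\beta+\gamma)=\tau(\gamma)$ if $\gamma>0$, $\tau(\Omega^\alpha\beta)=\beta$ if $\beta$ limit, $\tau(\Omega^\alpha(\beta+1))=\tau(\alpha)$ if $\alpha$ limit, $\tau(\Omega^{\alpha+1}(\beta+1))=\Omega$.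 $P$ is the set of countable ordinals of the form $\omega^\xi$; $\vartheta(\xi)$ ($\xi<\varepsilon_{\Omega+1}$) is the least $\theta\in P$ with $\theta>\xi^*$ such that all $\zeta<\xi$ with $\zeta^*<\theta$ have $\vartheta(\zeta)<\theta$. $\Omega_0=1$, $\Omega_{n+1}=\Omega^{\Omega_n}$, $\vartheta(\varepsilon_{\Omega+1})=\sup_n\vartheta(\Omega_n)$, $\hat\varepsilon_{\Omega+1}=\{\xi:\xi^*<\vartheta(\varepsilon_{\Omega+1})\}$; $P'$ = limit points of $P$. $\mathrm{FIX}$ = set of $\xi$ with $(\xi[1])^*<\xi^*=\tau(\xi)=\vartheta(\gamma)$ for some $\gamma>\xi$; $\mathrm{JUMP}=\{0\}\cup\{\text{successors}\}\cup\mathrm{FIX}$; $\vartheta^*(\xi)=\vartheta(\zeta)$ if $\xi=\zeta+1$, $\tau(\xi)$ if $\xi\in\mathrm{FIX}$, $0$ otherwise. Write $\xi=\alpha+\beta$ with $\alpha$ a multiple of $\Omega$, $\beta<\Omega$; $\check\xi=\alpha$ if $\vartheta^*(\xi)>0$, else $\xi$; $\vartheta^{(0)}(\xi)=\vartheta^*(\xi)$, $\vartheta^{(i+1)}(\xi)=\vartheta(\check\xi[\vartheta^{(i)}(\xi)])$. Define $\xi[n]_\vartheta$ recursively: $0[n]=0$; for $\Omega\le\xi\in\hat\varepsilon_{\Omega+1}$ with $\tau(\xi)<\Omega$, $\xi[n]=\xi[\tau(\xi)[n]]$; if $\xi=\vartheta(\zeta)\in P'$ ($\zeta\in\hat\varepsilon_{\Omega+1}$):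 $\xi[n]=\vartheta(\check\zeta[n]+\vartheta^*(\zeta))$ when $\tau(\check\zeta)<\Omega$, $\xi[n]=\vartheta^{(n)}(\zeta)$ when $\tau(\check\zeta)=\Omega$; $(\omega^{\alpha_1}+\dots+\omega^{\alpha_k})[n]=\omega^{\alpha_1}+\dots+\omega^{\alpha_{k-1}}+(\omega^{\alpha_k})[n]$ for $k\ge2$, $\alpha_1\ge\dots\ge\alpha_k$; $\vartheta(\beta)[n]=\vartheta^*(\beta)\cdot n$ for $\beta<\Omega$, $\beta\in\mathrm{JUMP}$. *)

(* Ordinals below omega_2 are modelled by Brouwer trees with
   countable (nat-indexed) and Omega-indexed (indexed by countable trees)
   suprema, compared by the standard inductive order (sound and complete for
   the ordinal values, classically). *)
From Stdlib Require Import List ClassicalEpsilon.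
Import ListNotations.

Inductive B : Type :=
| BZ : B
| BS : B -> B
| BL : (nat -> B) -> B.

Inductive O : Type :=
| OZ : O
| OS : O -> O
| OL : (nat -> O) -> O
| OW : (B -> O) -> O.

Fixpoint emb (b : B) : O :=
  match b with
  | BZ => OZ
  | BS b' => OS (emb b')
  | BL f => OL (fun k => emb (f k))
  end.

Inductive Ole : O -> O -> Prop :=
| Ole_Z x : Ole OZ x
| Ole_S x y : Ole x y -> Ole (OS x) (OS y)
| Ole_Lr x f k : Ole x (f k) -> Ole x (OL f)
| Ole_Ll f x : (forall k, Ole (f k) x) -> Ole (OL f) x
| Ole_Wr x f b : Ole x (f b) -> Ole x (OW f)
| Ole_Wl f x : (forall b, Ole (f b) x) -> Ole (OW f) x.

Definition Olt (x y : O) : Prop := Ole (OS x) y.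
Definition Oeq (x y : O) : Prop := Ole x y /\ Ole y x.

Definition the (P : O -> Prop) : O := epsilon (inhabits OZ) P.

Fixpoint add (x y : O) : O :=
  match y with
  | OZ => x
  | OS y' => OS (add x y')
  | OL f => OL (fun k => add x (f k))
  | OW f => OW (fun b => add x (f b))
  end.

Fixpoint mul (x y : O) : O :=
  match y with
  | OZ => OZ
  | OS y' => add (mul x y') x
  | OL f => OL (fun k => mul x (f k))
  | OW f => OW (fun b => mul x (f b))
  end.

Fixpoint exp (x y : O) : O :=
  match y with
  | OZ => OS OZ
  | OS y' => mul (exp x y') x
  | OL f => OL (fun k => exp x (f k))
  | OW f => OW (fun b => exp x (f b))
  end.

Definition natO (n : nat) : O := Nat.iter n OS OZ.
Definition omega : O := OL natO.
Definition Omega : O := OW emb.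

Fixpoint OmegaN (n : nat) : O :=
  match n with 0 => OS OZ | S k => exp Omega (OmegaN k) end.
Definition eps : O := OL OmegaN.         (* epsilon_{Omega+1} *)

Definition succO (x : O) : Prop := exists y, Oeq x (OS y).
Definition limO (x : O) : Prop := Olt OZ x /\ ~ succO x.

Definition NF (xi a b g : O) : Prop :=
  Oeq xi (add (mul (exp Omega a) b) g) /\ Olt OZ b /\ Olt b Omega /\
  Olt g (exp Omega a).

Inductive InC : O -> O -> Prop :=
| InC_zero xi x : Ole xi OZ -> Ole x OZ -> InC xi x
| InC_a xi a b g x : NF xi a b g -> InC a x -> InC xi x
| InC_g xi a b g x : NF xi a b g -> InC g x -> InC xi x
| InC_b xi a b g x : NF xi a b g -> Oeq x b -> InC xi x.

Definition star (xi : O) : O :=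
  the (fun s => InC xi s /\ forall y, InC xi y -> Ole y s).

(* FSO xi th r  :  xi[th] = r  (fundamental sequences at level Omega) *)
Inductive FSO : O -> O -> O -> Prop :=
| FSO_0 xi th : Ole xi OZ -> FSO xi th OZ
| FSO_1 xi th : Oeq xi (natO 1) -> FSO xi th OZ
| FSO_g xi th a b g g' : NF xi a b g -> Olt OZ g -> FSO g th g' ->
    FSO xi th (add (mul (exp Omega a) b) g')
| FSO_lim xi th a b g : NF xi a b g -> Ole g OZ -> limO b ->
    FSO xi th (mul (exp Omega a) th)
| FSO_succ xi th a b b' g r : NF xi a b g -> Ole g OZ -> Oeq b (OS b') ->
    Olt OZ b' -> FSO (exp Omega a) th r ->
    FSO xi th (add (mul (exp Omega a) b') r)
| FSO_expS xi th a : Oeq xi (exp Omega (OS a)) -> FSO xi th (mul (exp Omega a) th)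
| FSO_explim xi th a a' : Oeq xi (exp Omega a) -> limO a -> FSO a th a' ->
    FSO xi th (exp Omega a').

Definition fso (xi th : O) : O := the (FSO xi th).

Inductive Tau : O -> O -> Prop :=
| Tau_0 xi t : Ole xi OZ -> Oeq t OZ -> Tau xi t
| Tau_S xi z t : Oeq xi (OS z) -> Oeq t (natO 1) -> Tau xi t
| Tau_g xi a b g t : NF xi a b g -> Olt OZ g -> Tau g t -> Tau xi t
| Tau_lim xi a b g t : NF xi a b g -> Ole g OZ -> limO b -> Oeq t b -> Tau xi t
| Tau_alim xi a b b' g t : NF xi a b g -> Ole g OZ -> Oeq b (OS b') -> limO a ->
    Tau a t -> Tau xi t
| Tau_aS xi a a' b b' g t : NF xi a b g -> Ole g OZ -> Oeq b (OS b') ->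
    Oeq a (OS a') -> Oeq t Omega -> Tau xi t.

Definition tau (xi : O) : O := the (Tau xi).

Definition InP (t : O) : Prop := Olt t Omega /\ exists x, Oeq t (exp omega x).
Definition InP' (t : O) : Prop :=
  Olt OZ t /\ Olt t Omega /\
  forall x, Olt x t -> exists p, InP p /\ Olt x p /\ Olt p t.

Definition theta_cond (th : O -> O) (xi t : O) : Prop :=
  InP t /\ Olt (star xi) t /\
  forall z, Olt z xi -> Olt (star z) t -> Olt (th z) t.

Definition is_theta (th : O -> O) : Prop :=
  forall xi, Olt xi eps ->
    theta_cond th xi (th xi) /\ forall t, theta_cond th xi t -> Ole (th xi) t.

(* theta(eps_{Omega+1}) = sup_n theta(Omega_n) *)
Definition BH (th : O -> O) : O := OL (fun n => th (OmegaN n)).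

Definition InEpsHat (th : O -> O) (xi : O) : Prop :=
  Olt xi eps /\ Olt (star xi) (BH th).

Definition FIX (th : O -> O) (xi : O) : Prop :=
  Olt (star (fso xi (natO 1))) (star xi) /\ Oeq (star xi) (tau xi) /\
  exists g, Olt xi g /\ Olt g eps /\ Oeq (tau xi) (th g).

Definition JUMP (th : O -> O) (xi : O) : Prop :=
  Ole xi OZ \/ succO xi \/ FIX th xi.

Definition thstar (th : O -> O) (xi : O) : O :=
  the (fun v =>
    (exists z, Oeq xi (OS z) /\ Oeq v (th z)) \/
    (~ succO xi /\ FIX th xi /\ Oeq v (tau xi)) \/
    (~ succO xi /\ ~ FIX th xi /\ Oeq v OZ)).

Definition check (th : O -> O) (xi : O) : O :=
  the (fun c =>
    (Olt OZ (thstar th xi) /\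
       exists d r, Oeq c (mul Omega d) /\ Olt r Omega /\ Oeq xi (add c r)) \/
    (Ole (thstar th xi) OZ /\ Oeq c xi)).

Fixpoint thit (th : O -> O) (xi : O) (i : nat) : O :=
  match i with
  | 0 => thstar th xi
  | S i' => th (fso (check th xi) (thit th xi i'))
  end.

Fixpoint cnf_sum (l : list O) : O :=
  match l with [] => OZ | a :: l' => add (exp omega a) (cnf_sum l') end.

Fixpoint decr (l : list O) : Prop :=
  match l with
  | a :: ((b :: _) as l') => Ole b a /\ decr l'
  | _ => True
  end.

(* FSn th xi n r :  xi[n]_theta = r *)
Inductive FSn (th : O -> O) : O -> nat -> O -> Prop :=
| FSn_zero xi n : Ole xi OZ -> FSn th xi n OZ
| FSn_big xi n t : Ole Omega xi -> InEpsHat th xi -> Olt (tau xi) Omega ->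
    FSn th (tau xi) n t -> FSn th xi n (fso xi t)
| FSn_P1 xi z n t : Olt xi Omega -> Oeq xi (th z) -> InEpsHat th z -> InP' xi ->
    Olt (tau (check th z)) Omega -> FSn th (check th z) n t ->
    FSn th xi n (th (add t (thstar th z)))
| FSn_P2 xi z n : Olt xi Omega -> Oeq xi (th z) -> InEpsHat th z -> InP' xi ->
    Oeq (tau (check th z)) Omega -> FSn th xi n (thit th z n)
| FSn_cnf xi l a n t : Olt xi Omega -> l <> [] -> decr (l ++ [a]) ->
    Oeq xi (cnf_sum (l ++ [a])) -> FSn th (exp omega a) n t ->
    FSn th xi n (add (cnf_sum l) t)
| FSn_jump xi b n : Olt xi Omega -> Oeq xi (th b) -> Olt b Omega -> JUMP th b ->
    FSn th xi n (mul (thstar th b) (natO n)).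

From Stdlib Require Import List Classical ClassicalEpsilon FunctionalExtensionality Lia.
Import ListNotations.

(* A countable [alpha >= omega] whose [alpha[m]] is finite and [> 1] must be handled by the
   jump clause.  Every other clause yields a value of [theta] (an element of [P], hence [<= 1] or
   [>= omega]), [0], or a Cantor normal form with only its last term reduced, which keeps its
   infinite leading term.  For the jump value [theta^*(b) * m] the same gap in [P] leaves only
   [theta^*(b) = theta(0)] with [b = 1], so [alpha = theta(1) <= omega].  Applying the defining
   property of [theta] needs every argument below [epsilon_{Omega+1}]; this holds because the
   fundamental sequences [xi[t]] exist there (by induction along the [Omega_k]) and stay there. *)

Local Notation one := (OS OZ).
Local Notation two := (OS (OS OZ)).

Lemma Ole_refl x : Ole x x.
Proof.
  induction x; constructor; auto.
  - intro k; eapply Ole_Lr; eauto.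
  - intro b; eapply Ole_Wr; eauto.
Qed.

Lemma Ole_OL f k : Ole (f k) (OL f).
Proof. eapply Ole_Lr, Ole_refl. Qed.

Lemma Ole_OW f b : Ole (f b) (OW f).
Proof. eapply Ole_Wr, Ole_refl. Qed.

Lemma Ole_of_Ole_OZ x y : Ole x OZ -> Ole x y.
Proof.
  intro H; remember OZ as z; induction H; subst; try discriminate; constructor; auto.
Qed.

Lemma Ole_trans x y z : Ole x y -> Ole y z -> Ole x z.
Proof.
  intros Hxy Hyz; revert x Hxy; induction Hyz; intros x0 Hx0.
  - now apply Ole_of_Ole_OZ.
  - remember (OS x) as w; induction Hx0; subst; try discriminate; constructor; auto.
    injection Heqw as ->; auto.
  - eapply Ole_Lr; eauto.
  - remember (OL f) as w; induction Hx0; subst; try discriminate; try (constructor; auto).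
    injection Heqw as ->; eauto.
  - eapply Ole_Wr; eauto.
  - remember (OW f) as w; induction Hx0; subst; try discriminate; try (constructor; auto).
    injection Heqw as ->; eauto.
Qed.

Lemma Ole_S_inv x y : Ole (OS x) (OS y) -> Ole x y.
Proof. now inversion 1. Qed.

Lemma not_Ole_OS_OZ x : ~ Ole (OS x) OZ.
Proof. inversion 1. Qed.

Lemma Olt_OL_inv x f : Olt x (OL f) -> exists k, Olt x (f k).
Proof. inversion 1; eauto. Qed.

Lemma Olt_OW_inv x f : Olt x (OW f) -> exists b, Olt x (f b).
Proof. inversion 1; eauto. Qed.

Lemma Ole_OS_r x y : Ole x y -> Ole x (OS y).
Proof.
  induction 1; try (constructor; auto; fail).
  - eapply Ole_trans; [eassumption|]. constructor. apply Ole_OL.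
  - eapply Ole_trans; [eassumption|]. constructor. apply Ole_OW.
Qed.

Lemma Ole_succ x : Ole x (OS x).
Proof. apply Ole_OS_r, Ole_refl. Qed.

Lemma Olt_Ole x y : Olt x y -> Ole x y.
Proof. intro H; exact (Ole_trans _ _ _ (Ole_succ x) H). Qed.

Lemma Olt_Ole_trans x y z : Olt x y -> Ole y z -> Olt x z.
Proof. apply Ole_trans. Qed.

Lemma Ole_Olt_trans x y z : Ole x y -> Olt y z -> Olt x z.
Proof. intros Hxy Hyz; eapply Ole_trans; [constructor; exact Hxy | exact Hyz]. Qed.

Lemma Olt_trans x y z : Olt x y -> Olt y z -> Olt x z.
Proof. intros Hxy Hyz; exact (Olt_Ole_trans _ _ _ Hxy (Olt_Ole _ _ Hyz)). Qed.

Lemma Olt_irrefl x : ~ Olt x x.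
Proof.
  induction x as [|x IHx|f IH|f IH]; intro H.
  - inversion H.
  - exact (IHx (Ole_S_inv _ _ H)).
  - destruct (Olt_OL_inv _ _ H) as [k Hk]. exact (IH k (Ole_Olt_trans _ _ _ (Ole_OL f k) Hk)).
  - destruct (Olt_OW_inv _ _ H) as [b Hb]. exact (IH b (Ole_Olt_trans _ _ _ (Ole_OW f b) Hb)).
Qed.

Lemma Ole_Olt_False x y : Ole x y -> Olt y x -> False.
Proof. intros Hxy Hyx; exact (Olt_irrefl _ (Ole_Olt_trans _ _ _ Hxy Hyx)). Qed.

Lemma Ole_or_Olt x y : Ole x y \/ Olt y x.
Proof.
  revert y; induction x as [|x IHx|f IH|f IH]; intro y.
  - left; constructor.
  - induction y as [|y _|g IHg|g IHg].
    + right; repeat constructor.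
    + destruct (IHx y); [left | right]; constructor; assumption.
    + destruct (classic (exists k, Olt x (g k))) as [[k Hk]|Hn].
      * left; eapply Ole_Lr; eauto.
      * right; constructor; apply Ole_Ll; intro k.
        destruct (IHg k); [exfalso; eauto | now apply Ole_S_inv].
    + destruct (classic (exists b, Olt x (g b))) as [[b Hb]|Hn].
      * left; eapply Ole_Wr; eauto.
      * right; constructor; apply Ole_Wl; intro b.
        destruct (IHg b); [exfalso; eauto | now apply Ole_S_inv].
  - destruct (classic (exists k, Olt y (f k))) as [[k Hk]|Hn].
    + right; exact (Olt_Ole_trans _ _ _ Hk (Ole_OL f k)).
    + left; apply Ole_Ll; intro k; destruct (IH k y); [assumption | exfalso; eauto].
  - destruct (classic (exists b, Olt y (f b))) as [[b Hb]|Hn].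
    + right; exact (Olt_Ole_trans _ _ _ Hb (Ole_OW f b)).
    + left; apply Ole_Wl; intro b; destruct (IH b y); [assumption | exfalso; eauto].
Qed.

Lemma Olt_wf : well_founded Olt.
Proof.
  enough (H : forall x y, Ole y x -> Acc Olt y) by (intro x; exact (H x x (Ole_refl x))).
  induction x as [|x IHx|f IH|f IH]; intros y Hy; constructor; intros z Hz;
    pose proof (Olt_Ole_trans _ _ _ Hz Hy) as Hzx.
  - now apply not_Ole_OS_OZ in Hzx.
  - exact (IHx z (Ole_S_inv _ _ Hzx)).
  - destruct (Olt_OL_inv _ _ Hzx) as [k Hk]; exact (IH k z (Olt_Ole _ _ Hk)).
  - destruct (Olt_OW_inv _ _ Hzx) as [b Hb]; exact (IH b z (Olt_Ole _ _ Hb)).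
Qed.

Lemma the_spec (P : O -> Prop) : (exists x, P x) -> P (the P).
Proof. apply epsilon_spec. Qed.

Lemma add_ge_l x y : Ole x (add x y).
Proof.
  induction y; simpl.
  - apply Ole_refl.
  - now apply Ole_OS_r.
  - now apply Ole_Lr with (k := 0).
  - now apply Ole_Wr with (b := BZ).
Qed.

Lemma add_ge_r x y : Ole y (add x y).
Proof.
  induction y; simpl; constructor; auto.
  - intro k; eapply Ole_Lr; eauto.
  - intro b; eapply Ole_Wr; eauto.
Qed.

Lemma add_mono_r x y y' : Ole y y' -> Ole (add x y) (add x y').
Proof.
  induction 1; simpl.
  - apply add_ge_l.
  - now constructor.
  - eapply Ole_Lr; eauto.
  - now apply Ole_Ll.
  - eapply Ole_Wr; eauto.
  - now apply Ole_Wl.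
Qed.

Lemma add_mono_l x x' y : Ole x x' -> Ole (add x y) (add x' y).
Proof.
  intro H; induction y; simpl; try constructor; auto.
  - intro k; eapply Ole_Lr; eauto.
  - intro b; eapply Ole_Wr; eauto.
Qed.

Lemma add_OZ_l x : Ole (add OZ x) x.
Proof.
  induction x; simpl; constructor; auto.
  - intro k; eapply Ole_Lr; eauto.
  - intro b; eapply Ole_Wr; eauto.
Qed.

Lemma add_assoc x y z : add x (add y z) = add (add x y) z.
Proof.
  induction z; simpl; f_equal; auto; apply functional_extensionality; auto.
Qed.

Lemma mul_addr x y z : mul x (add y z) = add (mul x y) (mul x z).
Proof.
  induction z; simpl; auto.
  - rewrite IHz; symmetry; apply add_assoc.
  - f_equal; apply functional_extensionality; auto.
  - f_equal; apply functional_extensionality; auto.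
Qed.

Lemma mul_assoc x y z : mul x (mul y z) = mul (mul x y) z.
Proof.
  induction z; simpl; auto.
  - now rewrite mul_addr, IHz.
  - f_equal; apply functional_extensionality; auto.
  - f_equal; apply functional_extensionality; auto.
Qed.

Lemma mul_mono_r x y y' : Ole y y' -> Ole (mul x y) (mul x y').
Proof.
  induction 1; simpl.
  - constructor.
  - now apply add_mono_l.
  - eapply Ole_Lr; eauto.
  - now apply Ole_Ll.
  - eapply Ole_Wr; eauto.
  - now apply Ole_Wl.
Qed.

Lemma mul_mono_l x x' y : Ole x x' -> Ole (mul x y) (mul x' y).
Proof.
  intro H; induction y; simpl; try constructor.
  - eapply Ole_trans; [apply add_mono_l, IHy | apply add_mono_r, H].
  - intro k; eapply Ole_Lr; eauto.
  - intro b; eapply Ole_Wr; eauto.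
Qed.

Lemma mul_OZ_l y : Ole (mul OZ y) OZ.
Proof. induction y; simpl; try constructor; auto. Qed.

Lemma mul_one_l x : Oeq (mul one x) x.
Proof.
  induction x as [|x [IH1 IH2]|f IH|f IH]; simpl; split; try constructor; auto;
    intro k; first [eapply Ole_Lr | eapply Ole_Wr]; apply IH.
Qed.

Lemma mul_one_r x : Oeq (mul x one) x.
Proof. split; [apply add_OZ_l | apply add_ge_r]. Qed.

Lemma mul_ge_r x y : Ole one y -> Ole x (mul y x).
Proof. intro H; eapply Ole_trans; [apply mul_one_l | now apply mul_mono_l]. Qed.

Lemma mul_ge_l x y : Ole one y -> Ole x (mul x y).
Proof. intro H; eapply Ole_trans; [apply mul_one_r | now apply mul_mono_r]. Qed.

Lemma Olt_mul_two x : Ole one x -> Olt x (mul x two).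
Proof.
  intro H; simpl. eapply Ole_trans; [| apply add_mono_r, H]; simpl.
  constructor; apply add_ge_r.
Qed.

Lemma exp_ge_one x y : Ole one x -> Ole one (exp x y).
Proof.
  intro H; induction y; simpl.
  - apply Ole_refl.
  - eapply Ole_trans; [exact H | now apply mul_ge_r].
  - now apply Ole_Lr with (k := 0).
  - now apply Ole_Wr with (b := BZ).
Qed.

Lemma exp_mono_r x y y' : Ole one x -> Ole y y' -> Ole (exp x y) (exp x y').
Proof.
  intros Hx; induction 1; simpl.
  - now apply exp_ge_one.
  - now apply mul_mono_l.
  - eapply Ole_Lr; eauto.
  - now apply Ole_Ll.
  - eapply Ole_Wr; eauto.
  - now apply Ole_Wl.
Qed.

Lemma exp_add x a b : Ole (mul (exp x a) (exp x b)) (exp x (add a b)).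
Proof.
  induction b; simpl.
  - apply add_OZ_l.
  - rewrite mul_assoc; now apply mul_mono_l.
  - apply Ole_Ll; intro k; eapply Ole_Lr; eauto.
  - apply Ole_Wl; intro b; eapply Ole_Wr; eauto.
Qed.

Lemma one_le_omega : Ole one omega.
Proof. exact (Ole_OL natO 1). Qed.

Lemma natO_lt_omega n : Olt (natO n) omega.
Proof. exact (Ole_OL natO (S n)). Qed.

Lemma omega_le_exp_omega x : Olt OZ x -> Ole omega (exp omega x).
Proof.
  intro Hx; eapply Ole_trans; [apply mul_one_l | exact (exp_mono_r _ _ _ one_le_omega Hx)].
Qed.

Lemma two_le_Omega : Ole two Omega.
Proof. exact (Ole_OW emb (BS (BS BZ))). Qed.

Lemma one_le_Omega : Ole one Omega.
Proof. exact (Ole_trans _ _ _ (Ole_succ one) two_le_Omega). Qed.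

Fixpoint natB (n : nat) : B := match n with 0 => BZ | S k => BS (natB k) end.

Lemma emb_natB n : emb (natB n) = natO n.
Proof. induction n; simpl; congruence. Qed.

Lemma omega_lt_Omega : Olt omega Omega.
Proof.
  apply Ole_Wr with (b := BS (BL natB)); simpl; constructor.
  apply Ole_Ll; intro k; apply Ole_Lr with (k := k); rewrite emb_natB; apply Ole_refl.
Qed.

Lemma expO_ge_one a : Ole one (exp Omega a).
Proof. exact (exp_ge_one _ _ one_le_Omega). Qed.

Lemma expO_mono a a' : Ole a a' -> Ole (exp Omega a) (exp Omega a').
Proof. exact (exp_mono_r _ _ _ one_le_Omega). Qed.

Lemma expO_lt_S a : Olt (exp Omega a) (exp Omega (OS a)).
Proof.
  exact (Olt_Ole_trans _ _ _ (Olt_mul_two _ (expO_ge_one a)) (mul_mono_r _ _ _ two_le_Omega)).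
Qed.

Lemma expO_strict a a' : Olt a a' -> Olt (exp Omega a) (exp Omega a').
Proof. intro H; exact (Olt_Ole_trans _ _ _ (expO_lt_S a) (expO_mono _ _ H)). Qed.

Lemma Ole_expO a : Ole a (exp Omega a).
Proof.
  induction a; simpl.
  - constructor.
  - exact (Ole_Olt_trans _ _ _ IHa (expO_lt_S a)).
  - apply Ole_Ll; intro k; eapply Ole_Lr; eauto.
  - apply Ole_Wl; intro b; eapply Ole_Wr; eauto.
Qed.

Definition OmegaN_log (k : nat) : O := match k with 0 => OZ | S k' => OmegaN k' end.

Lemma OmegaN_exp k : OmegaN k = exp Omega (OmegaN_log k).
Proof. now destruct k. Qed.

Lemma OmegaN_log_lt_S k : Olt (OmegaN_log k) (OmegaN_log (S k)).
Proof.
  induction k.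
  - apply Ole_refl.
  - change (Olt (OmegaN k) (exp Omega (OmegaN k))); rewrite OmegaN_exp at 1.
    now apply expO_strict.
Qed.

Lemma OmegaN_lt_S k : Olt (OmegaN k) (OmegaN (S k)).
Proof. exact (OmegaN_log_lt_S (S k)). Qed.

Lemma OmegaN_mono k k' : (k <= k')%nat -> Ole (OmegaN k) (OmegaN k').
Proof.
  induction 1; [apply Ole_refl | exact (Ole_trans _ _ _ IHle (Olt_Ole _ _ (OmegaN_lt_S _)))].
Qed.

Lemma OmegaN_log_le k : Ole (OmegaN_log k) (OmegaN k).
Proof. destruct k; [constructor | apply Olt_Ole, OmegaN_lt_S]. Qed.

Lemma OmegaN_add_self k : Ole (add (OmegaN k) (OmegaN k)) (OmegaN (S k)).
Proof.
  apply Ole_trans with (mul (OmegaN k) Omega).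
  - eapply Ole_trans; [| apply mul_mono_r, two_le_Omega]; simpl.
    apply add_mono_l, add_ge_r.
  - rewrite OmegaN_exp, (OmegaN_exp (S k)).
    exact (expO_mono (OS (OmegaN_log k)) _ (OmegaN_log_lt_S k)).
Qed.

Lemma Olt_eps_iff x : Olt x eps <-> exists k, Olt x (OmegaN k).
Proof. split; [apply Olt_OL_inv | intros [k Hk]; eapply Ole_Lr; eauto]. Qed.

Lemma Olt_eps_common x y :
  Olt x eps -> Olt y eps -> exists k, Olt x (OmegaN k) /\ Olt y (OmegaN k).
Proof.
  intros [k1 H1]%Olt_eps_iff [k2 H2]%Olt_eps_iff; exists (Nat.max k1 k2).
  split; eapply Olt_Ole_trans; eauto; apply OmegaN_mono; lia.
Qed.

Lemma eps_add x y : Olt x eps -> Olt y eps -> Olt (add x y) eps.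
Proof.
  intros Hx Hy; destruct (Olt_eps_common x y Hx Hy) as [k [H1 H2]].
  apply Olt_eps_iff; exists (S k).
  change (Ole (add x (OS y)) (OmegaN (S k))).
  eapply Ole_trans; [| apply OmegaN_add_self].
  exact (Ole_trans _ _ _ (add_mono_l _ _ _ (Olt_Ole _ _ H1)) (add_mono_r _ _ _ H2)).
Qed.

Lemma eps_mul x y : Olt x eps -> Olt y eps -> Olt (mul x y) eps.
Proof.
  intros Hx Hy; destruct (Olt_eps_common x y Hx Hy) as [k [H1 H2]].
  apply Olt_eps_iff; exists (S (S (S k))).
  eapply Ole_Olt_trans; [| apply OmegaN_lt_S].
  apply Ole_trans with (mul (OmegaN k) (OmegaN k)).
  { exact (Ole_trans _ _ _ (mul_mono_l _ _ _ (Olt_Ole _ _ H1)) (mul_mono_r _ _ _ (Olt_Ole _ _ H2))). }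
  rewrite OmegaN_exp; eapply Ole_trans; [apply exp_add |].
  change (OmegaN (S (S k))) with (exp Omega (OmegaN (S k))); apply expO_mono.
  eapply Ole_trans; [| apply OmegaN_add_self].
  exact (Ole_trans _ _ _ (add_mono_l _ _ _ (OmegaN_log_le k)) (add_mono_r _ _ _ (OmegaN_log_le k))).
Qed.

Lemma eps_expO a : Olt a eps -> Olt (exp Omega a) eps.
Proof.
  intros [k Hk]%Olt_eps_iff; apply Olt_eps_iff; exists (S k).
  exact (Olt_Ole_trans _ _ _ (expO_lt_S a) (expO_mono _ _ Hk)).
Qed.

Lemma Olt_Omega_eps x : Olt x Omega -> Olt x eps.
Proof. intro H; apply Olt_eps_iff; exists 1; exact (Olt_Ole_trans _ _ _ H (proj2 (mul_one_l _))). Qed.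

Lemma OZ_lt_eps : Olt OZ eps.
Proof. apply Olt_Omega_eps, one_le_Omega. Qed.

Lemma natO_lt_eps n : Olt (natO n) eps.
Proof. exact (Olt_Omega_eps _ (Olt_trans _ _ _ (natO_lt_omega n) omega_lt_Omega)). Qed.

Lemma continuous_bracket (F : O -> O)
  (F_OL : forall f, F (OL f) = OL (fun k => F (f k)))
  (F_OW : forall f, F (OW f) = OW (fun b => F (f b))) x q :
  Ole (F OZ) x -> Olt x (F q) -> exists q0, Ole (F q0) x /\ Olt x (F (OS q0)).
Proof.
  intros H0; induction q as [|q IHq|f IH|f IH]; intro Hq.
  - exfalso; exact (Ole_Olt_False _ _ H0 Hq).
  - destruct (Ole_or_Olt (F q) x); eauto.
  - rewrite F_OL in Hq; destruct (Olt_OL_inv _ _ Hq); eauto.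
  - rewrite F_OW in Hq; destruct (Olt_OW_inv _ _ Hq); eauto.
Qed.

Lemma sub_exists u x : Ole u x -> exists r, Oeq x (add u r).
Proof.
  intro H.
  destruct (continuous_bracket (add u) (fun _ => eq_refl) (fun _ => eq_refl) x (OS x) H)
    as [r [H1 H2]].
  - constructor; apply add_ge_r.
  - exists r; split; [exact (Ole_S_inv _ _ H2) | exact H1].
Qed.

Lemma div_exists y x : Ole one y -> exists q r, Oeq x (add (mul y q) r) /\ Olt r y.
Proof.
  intro Hy.
  destruct (continuous_bracket (mul y) (fun _ => eq_refl) (fun _ => eq_refl) x (OS x)
              (Ole_Z _)) as [q [H1 H2]].
  - simpl; eapply Ole_trans; [| apply add_mono_r, Hy]; constructor; now apply mul_ge_r.
  - destruct (sub_exists _ _ H1) as [r Hr]; exists q, r; split; [exact Hr |].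
    destruct (Ole_or_Olt y r) as [Hyr|]; [exfalso | assumption].
    refine (Ole_Olt_False _ _ _ H2); simpl.
    exact (Ole_trans _ _ _ (add_mono_r _ _ _ Hyr) (proj2 Hr)).
Qed.

Lemma NF_exists xi : Ole one xi -> Olt xi eps -> exists a b g, NF xi a b g.
Proof.
  intros H1 [[|k] Hk]%Olt_eps_iff; [exfalso; exact (Ole_Olt_False _ _ H1 Hk) |].
  destruct (continuous_bracket (exp Omega) (fun _ => eq_refl) (fun _ => eq_refl) xi _ H1 Hk)
    as [a [Ha1 Ha2]].
  destruct (div_exists (exp Omega a) xi (expO_ge_one a)) as [q [r [Hq Hr]]].
  exists a, q, r; split; [exact Hq |]; split; [| split; [| exact Hr]].
  - destruct (Ole_or_Olt q OZ) as [H|H]; [exfalso | exact H].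
    refine (Ole_Olt_False _ _ _ (Olt_Ole_trans _ _ _ Hr Ha1)).
    eapply Ole_trans; [apply Hq |]; eapply Ole_trans; [| apply add_OZ_l].
    apply add_mono_l; eapply Ole_trans; [apply mul_mono_r, H | constructor].
  - destruct (Ole_or_Olt Omega q) as [H|H]; [exfalso | exact H].
    refine (Ole_Olt_False _ _ _ Ha2); simpl.
    exact (Ole_trans _ _ _ (mul_mono_r _ _ _ H) (Ole_trans _ _ _ (add_ge_l _ _) (proj2 Hq))).
Qed.

Section NormalForm.
Variables xi a b g : O.
Hypothesis HNF : NF xi a b g.

Lemma NF_head_le : Ole (mul (exp Omega a) b) xi.
Proof. exact (Ole_trans _ _ _ (add_ge_l _ _) (proj2 (proj1 HNF))). Qed.

Lemma NF_expO_le_head : Ole (exp Omega a) (mul (exp Omega a) b).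
Proof. exact (mul_ge_l _ _ (proj1 (proj2 HNF))). Qed.

Lemma NF_expO_le : Ole (exp Omega a) xi.
Proof. exact (Ole_trans _ _ _ NF_expO_le_head NF_head_le). Qed.

Lemma NF_tail_lt : Olt g xi.
Proof. exact (Olt_Ole_trans _ _ _ (proj2 (proj2 (proj2 HNF))) NF_expO_le). Qed.

Lemma NF_coef_le : Ole b xi.
Proof. exact (Ole_trans _ _ _ (mul_ge_r _ _ (expO_ge_one a)) NF_head_le). Qed.

Lemma NF_ge_one : Ole one xi.
Proof. exact (Ole_trans _ _ _ (proj1 (proj2 HNF)) NF_coef_le). Qed.

Lemma NF_eq_expO b' : Ole g OZ -> Oeq b (OS b') -> Ole b' OZ -> Oeq xi (exp Omega a).
Proof.
  intros Hg0 Hb' Hb'0; split; [| exact NF_expO_le].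
  eapply Ole_trans; [apply (proj1 HNF) |]; eapply Ole_trans; [apply add_mono_r, Hg0 |].
  eapply Ole_trans; [| apply mul_one_r]; apply mul_mono_r.
  eapply Ole_trans; [apply Hb' | now constructor].
Qed.

End NormalForm.

(* Induction on [k] handles the only case not reducing [xi], [xi = Omega^a] with [a] a limit:
   then [a < OmegaN_log k], since [Omega^a <= xi < OmegaN k = Omega^(OmegaN_log k)]. *)
Lemma FSO_exists_below k :
  (forall xi th, Olt xi (OmegaN_log k) -> exists r, FSO xi th r) ->
  forall xi th, Olt xi (OmegaN k) -> exists r, FSO xi th r.
Proof.
  intros IHk xi; induction xi as [xi IH] using (well_founded_induction Olt_wf); intros th Hxi.
  destruct (Ole_or_Olt xi OZ) as [H0|H0]; [exists OZ; now apply FSO_0 |].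
  destruct (NF_exists xi H0 (proj2 (Olt_eps_iff xi) (ex_intro _ k Hxi))) as [a [b [g HNF]]].
  destruct (Ole_or_Olt g OZ) as [Hg0|Hg0].
  2:{ pose proof (NF_tail_lt _ _ _ _ HNF) as Hgx.
      destruct (IH g Hgx th (Olt_trans _ _ _ Hgx Hxi)) as [r Hr].
      eexists; eapply FSO_g; eauto. }
  destruct (classic (succO b)) as [[b' Hb']|Hlim].
  2:{ eexists; eapply FSO_lim; eauto; split; [apply HNF | exact Hlim]. }
  destruct (Ole_or_Olt b' OZ) as [Hb'0|Hb'0].
  2:{ assert (Hex : Olt (exp Omega a) xi).
      { eapply Olt_Ole_trans; [apply Olt_mul_two, expO_ge_one |].
        eapply Ole_trans; [| exact (NF_head_le _ _ _ _ HNF)].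
        apply mul_mono_r; eapply Ole_trans; [| apply Hb']; now constructor. }
      destruct (IH _ Hex th (Olt_trans _ _ _ Hex Hxi)) as [r Hr].
      eexists; eapply FSO_succ; eauto. }
  pose proof (NF_eq_expO _ _ _ _ HNF b' Hg0 Hb' Hb'0) as Hxie.
  destruct (Ole_or_Olt a OZ) as [Ha0|Ha0].
  { exists OZ; apply FSO_1; split; [| exact H0].
    exact (Ole_trans _ _ _ (proj1 Hxie) (expO_mono _ _ Ha0)). }
  destruct (classic (succO a)) as [[a' Ha']|Hna].
  { eexists; apply FSO_expS; split.
    - exact (Ole_trans _ _ _ (proj1 Hxie) (expO_mono _ _ (proj1 Ha'))).
    - exact (Ole_trans _ _ _ (expO_mono _ _ (proj2 Ha')) (proj2 Hxie)). }
  assert (Hak : Olt a (OmegaN_log k)).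
  { destruct (Ole_or_Olt (OmegaN_log k) a) as [H|H]; [exfalso | exact H].
    refine (Ole_Olt_False _ _ _ Hxi); rewrite OmegaN_exp.
    exact (Ole_trans _ _ _ (expO_mono _ _ H) (proj2 Hxie)). }
  destruct (IHk a th Hak) as [a' Ha'].
  eexists; eapply FSO_explim; eauto; split; assumption.
Qed.

Lemma FSO_exists xi th : Olt xi eps -> exists r, FSO xi th r.
Proof.
  intros [k Hk]%Olt_eps_iff; revert xi th Hk.
  induction k; apply FSO_exists_below; [| exact IHk].
  intros xi th H; exfalso; exact (not_Ole_OS_OZ _ H).
Qed.

Lemma FSO_lt_eps xi th r : FSO xi th r -> Olt xi eps -> Olt th eps -> Olt r eps.
Proof.
  intros HF Hxi Hth; induction HF.
  - exact (Ole_Olt_trans _ _ _ (Ole_Z _) Hxi).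
  - exact (Ole_Olt_trans _ _ _ (Ole_Z _) Hxi).
  - apply eps_add; [exact (Ole_Olt_trans _ _ _ (NF_head_le _ _ _ _ H) Hxi) |].
    exact (IHHF (Olt_trans _ _ _ (NF_tail_lt _ _ _ _ H) Hxi) Hth).
  - exact (eps_mul _ _ (Ole_Olt_trans _ _ _ (NF_expO_le _ _ _ _ H) Hxi) Hth).
  - apply eps_add; [| exact (IHHF (Ole_Olt_trans _ _ _ (NF_expO_le _ _ _ _ H) Hxi) Hth)].
    refine (Ole_Olt_trans _ _ _ _ (Ole_Olt_trans _ _ _ (NF_head_le _ _ _ _ H) Hxi)).
    apply mul_mono_r; exact (Ole_trans _ _ _ (Ole_succ _) (proj2 H1)).
  - apply eps_mul; [| exact Hth].
    exact (Olt_trans _ _ _ (expO_lt_S _) (Ole_Olt_trans _ _ _ (proj2 H) Hxi)).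
  - apply eps_expO, IHHF; [| exact Hth].
    exact (Ole_Olt_trans _ _ _ (Ole_expO a) (Ole_Olt_trans _ _ _ (proj2 H) Hxi)).
Qed.

Lemma fso_lt_eps xi th : Olt xi eps -> Olt th eps -> Olt (fso xi th) eps.
Proof.
  intros Hxi Hth; apply (FSO_lt_eps xi th); trivial.
  unfold fso; apply the_spec, FSO_exists, Hxi.
Qed.

Lemma NF_le_one xi a b g : NF xi a b g -> Ole xi one -> Ole a OZ /\ Ole g OZ /\ Ole b one.
Proof.
  intros HNF Hx.
  assert (Ha : Ole a OZ).
  { destruct (Ole_or_Olt a OZ) as [H|H]; [exact H | exfalso].
    refine (Olt_irrefl one (Ole_trans _ _ _ _ Hx)).
    eapply Ole_trans; [exact (Ole_trans _ _ _ two_le_Omega (proj2 (mul_one_l _))) |].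
    exact (Ole_trans _ _ _ (expO_mono _ _ H) (NF_expO_le _ _ _ _ HNF)). }
  split; [exact Ha | split].
  - apply Ole_S_inv; exact (Ole_trans _ _ _ (proj2 (proj2 (proj2 HNF))) (expO_mono _ _ Ha)).
  - exact (Ole_trans _ _ _ (NF_coef_le _ _ _ _ HNF) Hx).
Qed.

Lemma InC_le xi y : InC xi y -> (Ole xi OZ -> Ole y OZ) /\ (Ole xi one -> Ole y one).
Proof.
  induction 1 as [xi y Hxi Hy|xi a b g y HNF _ IH|xi a b g y HNF _ IH|xi a b g y HNF Hy];
    [split; intro; [exact Hy | exact (Ole_trans _ _ _ Hy (Ole_Z _))] |..];
    (split; intro Hx;
     [exfalso; exact (not_Ole_OS_OZ _ (Ole_trans _ _ _ (NF_ge_one _ _ _ _ HNF) Hx)) |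
      destruct (NF_le_one _ _ _ _ HNF Hx) as (Ha & Hg & Hb)]).
  - exact (Ole_trans _ _ _ (proj1 IH Ha) (Ole_Z _)).
  - exact (Ole_trans _ _ _ (proj1 IH Hg) (Ole_Z _)).
  - exact (Ole_trans _ _ _ (proj1 Hy) Hb).
Qed.

Lemma star_le_OZ xi : Ole xi OZ -> Ole (star xi) OZ.
Proof.
  intro H; unfold star.
  refine (proj1 (InC_le _ _ (proj1 (the_spec (fun s => InC xi s /\ forall y, InC xi y -> Ole y s) _))) H).
  exists OZ; split; [apply InC_zero; [exact H | constructor] | intros y Hy; exact (proj1 (InC_le _ _ Hy) H)].
Qed.

Lemma star_le_one xi : Oeq xi one -> Ole (star xi) one.
Proof.
  intro H; unfold star.
  refine (proj2 (InC_le _ _ (proj1 (the_spec (fun s => InC xi s /\ forall y, InC xi y -> Ole y s) _))) (proj1 H)).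
  assert (HNF : NF xi OZ one OZ).
  { split; [exact H | split; [apply Ole_refl | split; [apply two_le_Omega | apply Ole_refl]]]. }
  exists one; split.
  - eapply InC_b; [exact HNF | split; apply Ole_refl].
  - intros y Hy; exact (proj2 (InC_le _ _ Hy) (proj1 H)).
Qed.

Lemma InP_ge_one p : InP p -> Ole one p.
Proof. intros [_ [x Hx]]; exact (Ole_trans _ _ _ (exp_ge_one _ _ one_le_omega) (proj2 Hx)). Qed.

Lemma InP_gap p : InP p -> Ole p one \/ Ole omega p.
Proof.
  intros [_ [x Hx]]; destruct (Ole_or_Olt x OZ) as [H|H]; [left | right].
  - exact (Ole_trans _ _ _ (proj1 Hx) (exp_mono_r _ _ _ one_le_omega H)).
  - exact (Ole_trans _ _ _ (omega_le_exp_omega _ H) (proj2 Hx)).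
Qed.

Lemma cnf_sum_app_ge l s : Ole (cnf_sum l) (cnf_sum (l ++ s)).
Proof. induction l; simpl; [constructor | now apply add_mono_r]. Qed.

Lemma add_one_natO n : add one (natO n) = natO (S n).
Proof. induction n; simpl in *; congruence. Qed.

Lemma cnf_sum_le_length s :
  (forall y, In y s -> Ole y OZ) -> Ole (cnf_sum s) (natO (length s)).
Proof.
  induction s as [|b s IH]; intro Hs; simpl; [constructor |].
  change (OS (natO (length s))) with (natO (S (length s))); rewrite <- add_one_natO.
  eapply Ole_trans; [apply add_mono_l | apply add_mono_r, IH; intros; apply Hs; now right].
  exact (exp_mono_r _ _ _ one_le_omega (Hs b (or_introl eq_refl))).
Qed.

Lemma decr_le_OZ a s : decr (a :: s) -> Ole a OZ -> forall y, In y (a :: s) -> Ole y OZ.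
Proof.
  revert a; induction s as [|b s IH]; intros a Hd Ha y [<-|Hy]; try exact Ha.
  - destruct Hy.
  - destruct Hd as [Hba Hd]; exact (IH b Hd (Ole_trans _ _ _ Hba Ha) y Hy).
Qed.

Lemma cnf_sum_prefix_ge_omega l s :
  l <> [] -> decr (l ++ s) -> Ole omega (cnf_sum (l ++ s)) -> Ole omega (cnf_sum l).
Proof.
  destruct l as [|a l]; intros Hl Hd Hom; [congruence |].
  destruct (Ole_or_Olt a OZ) as [Ha|Ha].
  - exfalso; refine (Ole_Olt_False _ _ Hom (Ole_Olt_trans _ _ _ _ (natO_lt_omega _))).
    exact (cnf_sum_le_length _ (decr_le_OZ a _ Hd Ha)).
  - exact (Ole_trans _ _ _ (omega_le_exp_omega a Ha) (add_ge_l _ _)).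
Qed.

Section Theta.
Variable th : O -> O.
Hypothesis Hth : is_theta th.

Lemma th_InP z : Olt z eps -> InP (th z).
Proof. intro Hz; exact (proj1 (proj1 (Hth z Hz))). Qed.

Lemma th_lt_Omega z : Olt z eps -> Olt (th z) Omega.
Proof. intro Hz; exact (proj1 (th_InP z Hz)). Qed.

Lemma th_lt_eps z : Olt z eps -> Olt (th z) eps.
Proof. intro Hz; exact (Olt_Omega_eps _ (th_lt_Omega z Hz)). Qed.

Lemma th_le_one z : Ole z OZ -> Ole (th z) one.
Proof.
  intros H0; pose proof (Ole_Olt_trans _ _ _ H0 OZ_lt_eps) as Hz.
  apply (proj2 (Hth z Hz)); split; [| split].
  - split; [exact two_le_Omega | exists OZ; split; apply Ole_refl].
  - constructor; exact (star_le_OZ _ H0).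
  - intros y Hy; exfalso; exact (not_Ole_OS_OZ _ (Ole_trans _ _ _ Hy H0)).
Qed.

(* [1 <= theta 0 < theta w]: [0 < w] and [star 0 = 0] meet the defining condition of [theta w]. *)
Lemma th_ge_two w : Olt w eps -> Olt OZ w -> Ole two (th w).
Proof.
  intros Hw H0; destruct (Hth w Hw) as [[HP [_ Hmono]] _].
  refine (Ole_trans _ _ _ _ (Hmono OZ H0 _)).
  - constructor; exact (InP_ge_one _ (th_InP _ OZ_lt_eps)).
  - exact (Ole_Olt_trans _ _ _ (star_le_OZ _ (Ole_refl _)) (InP_ge_one _ HP)).
Qed.

Lemma th_lt_omega_le_OZ w : Olt w eps -> Olt (th w) omega -> Ole w OZ.
Proof.
  intros Hw Hlt; destruct (Ole_or_Olt w OZ) as [H|H]; [exact H | exfalso].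
  destruct (InP_gap _ (th_InP w Hw)) as [Hp|Hp].
  - exact (Olt_irrefl one (Ole_trans _ _ _ (th_ge_two w Hw H) Hp)).
  - exact (Ole_Olt_False _ _ Hp Hlt).
Qed.

Lemma th_not_between w q : Olt w eps -> Oeq q (th w) -> Olt one q -> Olt q omega -> False.
Proof.
  intros Hw Hq H1 H2.
  pose proof (th_lt_omega_le_OZ w Hw (Ole_Olt_trans _ _ _ (proj2 Hq) H2)) as Hw0.
  exact (Olt_irrefl one (Ole_trans _ _ _ H1 (Ole_trans _ _ _ (proj1 Hq) (th_le_one w Hw0)))).
Qed.

Lemma th_le_omega_of_one b : Oeq b one -> Ole (th b) omega.
Proof.
  intro Hb1; assert (Hb : Olt b eps) by exact (Ole_Olt_trans _ _ _ (proj1 Hb1) (natO_lt_eps 1)).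
  apply (proj2 (Hth b Hb)); split; [| split].
  - split; [exact omega_lt_Omega | exists one; split; apply mul_one_l].
  - exact (Ole_Olt_trans _ _ _ (star_le_one b Hb1) (natO_lt_omega 1)).
  - intros y Hy _; refine (Ole_Olt_trans _ _ _ (th_le_one y _) (natO_lt_omega 1)).
    exact (Ole_S_inv _ _ (Ole_trans _ _ _ Hy (proj1 Hb1))).
Qed.

Lemma thstar_spec xi :
  (exists z, Oeq xi (OS z) /\ Oeq (thstar th xi) (th z)) \/
  (~ succO xi /\ FIX th xi /\ Oeq (thstar th xi) (tau xi)) \/
  (~ succO xi /\ ~ FIX th xi /\ Oeq (thstar th xi) OZ).
Proof.
  unfold thstar; apply the_spec.
  destruct (classic (succO xi)) as [[z Hz]|Hs]; [| destruct (classic (FIX th xi))].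
  - exists (th z); left; exists z; split; [exact Hz | split; apply Ole_refl].
  - exists (tau xi); right; left; split; [exact Hs | split; [assumption | split; apply Ole_refl]].
  - exists OZ; right; right; split; [exact Hs | split; [assumption | split; apply Ole_refl]].
Qed.

Lemma thstar_cases xi : Olt xi eps ->
  Ole (thstar th xi) OZ \/
  (exists z, Oeq xi (OS z) /\ Olt z eps /\ Oeq (thstar th xi) (th z)) \/
  (exists g, Olt xi g /\ Olt g eps /\ Oeq (thstar th xi) (th g)).
Proof.
  intro Hx; destruct (thstar_spec xi) as [[z [Hz Hv]]|[[_ [Hf Hv]]|[_ [_ Hv]]]].
  - right; left; exists z; split; [exact Hz | split; [| exact Hv]].
    exact (Olt_trans _ _ _ (Ole_refl (OS z)) (Ole_Olt_trans _ _ _ (proj2 Hz) Hx)).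
  - right; right; destruct Hf as [_ [_ [g [Hxg [Hg Htau]]]]]; exists g.
    split; [exact Hxg | split; [exact Hg |]].
    split; eapply Ole_trans; [apply Hv | apply Htau | apply Htau | apply Hv].
  - left; apply Hv.
Qed.

Lemma thstar_lt_eps xi : Olt xi eps -> Olt (thstar th xi) eps.
Proof.
  intro Hx; destruct (thstar_cases xi Hx) as [H|[[z [_ [Hz H]]]|[g [_ [Hg H]]]]].
  - exact (Ole_Olt_trans _ _ _ H OZ_lt_eps).
  - exact (Ole_Olt_trans _ _ _ (proj1 H) (th_lt_eps z Hz)).
  - exact (Ole_Olt_trans _ _ _ (proj1 H) (th_lt_eps g Hg)).
Qed.

Lemma check_le xi : Ole (check th xi) xi.
Proof.
  unfold check.
  match goal with |- Ole (the ?P) _ => assert (HP : exists c, P c) end.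
  { destruct (Ole_or_Olt (thstar th xi) OZ) as [H|H].
    - exists xi; right; split; [exact H | split; apply Ole_refl].
    - destruct (div_exists Omega xi one_le_Omega) as [d [r [Hxi Hr]]].
      exists (mul Omega d); left; split; [exact H |].
      exists d, r; split; [split; apply Ole_refl | split; assumption]. }
  destruct (the_spec _ HP) as [[_ [d [r [_ [_ Hxi]]]]]|[_ Hxi]].
  - exact (Ole_trans _ _ _ (add_ge_l _ _) (proj2 Hxi)).
  - exact (proj1 Hxi).
Qed.

Lemma thit_lt_eps xi i : Olt xi eps -> Olt (thit th xi i) eps.
Proof.
  intro Hx; induction i as [|i IH]; simpl; [exact (thstar_lt_eps xi Hx) |].
  exact (th_lt_eps _ (fso_lt_eps _ _ (Ole_Olt_trans _ _ _ (check_le xi) Hx) IH)).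
Qed.

Lemma FSn_lt_eps xi n t : FSn th xi n t -> Olt t eps.
Proof.
  induction 1 as [| xi n t _ [Hxi _] _ _ IH
                 | xi z n t _ _ [Hz _] _ _ _ IH | xi z n _ _ [Hz _] _ _
                 | xi l a n t Hxi _ _ Hl _ IH | xi b n Hxi _ Hb _].
  - exact OZ_lt_eps.
  - exact (fso_lt_eps _ _ Hxi IH).
  - exact (th_lt_eps _ (eps_add _ _ IH (thstar_lt_eps z Hz))).
  - exact (thit_lt_eps z n Hz).
  - apply eps_add; [| exact IH].
    refine (Olt_Omega_eps _ (Ole_Olt_trans _ _ _ _ Hxi)).
    exact (Ole_trans _ _ _ (cnf_sum_app_ge l [a]) (proj2 Hl)).
  - exact (eps_mul _ _ (thstar_lt_eps b (Olt_Omega_eps _ Hb)) (natO_lt_eps n)).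
Qed.

Lemma thit_not_between xi i :
  Olt xi eps -> Olt one (thit th xi i) -> Olt (thit th xi i) omega -> False.
Proof.
  intros Hx H1 H2; destruct i as [|i]; simpl in H1, H2.
  - destruct (thstar_cases xi Hx) as [H|[[w [_ [Hw H]]]|[w [_ [Hw H]]]]].
    + exact (not_Ole_OS_OZ _ (Ole_trans _ _ _ (Olt_Ole _ _ H1) H)).
    + exact (th_not_between w _ Hw H H1 H2).
    + exact (th_not_between w _ Hw H H1 H2).
  - refine (th_not_between _ _ _ (conj (Ole_refl _) (Ole_refl _)) H1 H2).
    exact (fso_lt_eps _ _ (Ole_Olt_trans _ _ _ (check_le xi) Hx) (thit_lt_eps xi i Hx)).
Qed.

(* The only finite value [theta w] is at [w = 0], and [theta^* b = theta 0] only for [b = 1]. *)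
Lemma thstar_mul_between b n : Olt b eps ->
  Olt one (mul (thstar th b) (natO n)) -> Olt (mul (thstar th b) (natO n)) omega -> Oeq b one.
Proof.
  intros Hb H1 H2; destruct n as [|n]; [exfalso; exact (not_Ole_OS_OZ _ H1) |].
  assert (Hv : Olt (thstar th b) omega) by exact (Ole_Olt_trans _ _ _ (add_ge_r _ _) H2).
  destruct (thstar_cases b Hb) as [H0|[[w [Hbw [Hw H]]]|[g [Hbg [Hg H]]]]].
  - exfalso; refine (not_Ole_OS_OZ _ (Ole_trans _ _ _ (Olt_Ole _ _ H1) _)).
    exact (Ole_trans _ _ _ (mul_mono_l _ _ _ H0) (mul_OZ_l _)).
  - pose proof (th_lt_omega_le_OZ w Hw (Ole_Olt_trans _ _ _ (proj2 H) Hv)) as Hw0.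
    split; [exact (Ole_trans _ _ _ (proj1 Hbw) (Ole_S _ _ Hw0)) |].
    exact (Ole_trans _ _ _ (Ole_S _ _ (Ole_Z w)) (proj2 Hbw)).
  - exfalso; pose proof (th_lt_omega_le_OZ g Hg (Ole_Olt_trans _ _ _ (proj2 H) Hv)) as Hg0.
    exact (not_Ole_OS_OZ _ (Ole_trans _ _ _ Hbg Hg0)).
Qed.

Lemma BH_lt_Omega x : Olt x (BH th) -> Olt x Omega.
Proof.
  intros [k Hk]%Olt_OL_inv; refine (Olt_trans _ _ _ Hk (th_lt_Omega _ _)).
  exact (Ole_Lr _ _ (S k) (OmegaN_lt_S k)).
Qed.

End Theta.

Theorem lemma6p8 (th : O -> O) (Hth : is_theta th) (alpha : O) (m : nat) (eta : O) :
  Ole omega alpha -> Olt alpha (BH th) ->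
  FSn th alpha m eta -> Olt (natO 1) eta -> Olt eta omega ->
  Oeq alpha omega.
Proof.
  intros Hom Hlt Hfs H1 H2; pose proof (BH_lt_Omega th Hth _ Hlt) as HaO.
  destruct Hfs as [xi n H0 | xi n t HO | xi z n t _ _ [Hz _] _ _ Ht
                  | xi z n _ _ [Hz _] _ _ | xi l a n t _ Hl Hd Hxi _
                  | xi b n _ Hxb Hb _ ].
  - exfalso; exact (not_Ole_OS_OZ _ (Ole_trans _ _ _ one_le_omega (Ole_trans _ _ _ Hom H0))).
  - exfalso; exact (Ole_Olt_False _ _ HO HaO).
  - refine (False_ind _ (th_not_between th Hth _ _ _ (conj (Ole_refl _) (Ole_refl _)) H1 H2)).
    exact (eps_add _ _ (FSn_lt_eps th Hth _ _ _ Ht) (thstar_lt_eps th Hth z Hz)).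
  - exfalso; exact (thit_not_between th Hth z n Hz H1 H2).
  - exfalso; refine (Ole_Olt_False _ _ (Ole_trans _ _ _ _ (add_ge_l _ t)) H2).
    exact (cnf_sum_prefix_ge_omega l [a] Hl Hd (Ole_trans _ _ _ Hom (proj1 Hxi))).
  - pose proof (thstar_mul_between th Hth b n (Olt_Omega_eps _ Hb) H1 H2) as Hb1.
    split; [exact (Ole_trans _ _ _ (proj1 Hxb) (th_le_omega_of_one th Hth b Hb1)) | exact Hom].
Qed.
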